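(* Let $G$ and $G'$ be bipartite graphs with the same left set. Assume $G$ has $\varepsilon$-rich matching up to $K$ with load $\ell$, and $G'$ has $\varepsilon'$-rich matching up to $\ell$ with load $1$. Then the product $G \times G'$ has $(\varepsilon+\varepsilon')$-rich matching up to $K$ with load $1$. Moreover, if the matchings in $G$ and $G'$ are with $T$-expiration, then so is the matching in the product.
   Context: Graphs are bipartite with left set $L$ and right set $R$, every left node having exactly $D$ neighbors (left degree $D$). The product of two graphs with the same left set $L$ and right sets $R_1,R_2$ is the graph with left set $L$, right set $R_1\times R_2$, in which $x$ is adjacent to $(y_1,y_2)$ iff $x$ is adjacent to $y_1$ in the first graph and to $y_2$ in the second. $\varepsilon$-rich matching game with parameter $K$ and load $\ell$ on a graph of left degree $D$: Requester and Matcher alternate turns (Requester starts) and maintain a collection $M$ of assignments, initially empty. Requester retracts zero or more assignments so that at most $K-1$ remain, and selects a left node $x$. Matcher adds an assignment for $x$: a set of at least $(1-\varepsilon)D$ edges incident to $x$; afterwards every right node must be incident to at most $\ell$ edges among all assignments in $M$, otherwise Matcher loses. In the variant with $T$-expiration, Requester must retract the assignment added in round $i$ during one of the rounds $i+1,\dots,i+T$. The graph has $\varepsilon$-rich matching up to $K$ with load $\ell$ (with $T$-expiration) if Matcher has a strategy with which she never loses. *)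

From HB Require Import structures.
From mathcomp Require Import all_boot all_order all_algebra.
Set Implicit Arguments. Unset Strict Implicit. Unset Printing Implicit Defensive.
Import Order.TTheory GRing.Theory Num.Theory.

(* A bipartite graph with left set L and right set R is given by its
   adjacency relation E : L -> R -> bool (x adjacent to y iff E x y). *)

Definition left_degree (L R : finType) (E : L -> R -> bool) (D : nat) : Prop :=
  forall x : L, #|[set y | E x y]| = D.

Definition prod_graph (L R1 R2 : finType) (E1 : L -> R1 -> bool)
  (E2 : L -> R2 -> bool) : L -> (R1 * R2)%type -> bool :=
  fun x y => E1 x y.1 && E2 x y.2.

(* A Requester move in round n (rounds numbered 0,1,2,...):
   (keep, x) where keep is the list of (indices of the rounds of) the
   assignments that remain after the retraction, and x the selected left
   node.  The assignment added in round i is identified with i. *)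
Definition rmove (L : Type) := (seq nat * L)%type.

(* rounds whose assignments are in M just before Matcher's move of round n
   (after her move the added round n is in M as well) *)
Definition alive_after (L : Type) (r : nat -> rmove L) (n : nat) : seq nat :=
  n :: (r n).1.

Definition alive_before (L : Type) (r : nat -> rmove L) (n : nat) : seq nat :=
  if n is m.+1 then alive_after r m else [::].

(* Legal Requester play for parameter K, with T-expiration when
   T = Some t, without expiration when T = None. *)
Definition legal_requester (L : Type) (K : nat) (T : option nat)
  (r : nat -> rmove L) : Prop :=
  forall n,
    [/\ uniq (r n).1,
        {subset (r n).1 <= alive_before r n},
        size (r n).1 <= K.-1
      & (if T is Some t then forall i, i \in (r n).1 -> n < i + t else True)].

(* Matcher strategy: given the history of Requester moves of rounds
   0..n (the current one last), the set of right nodes y such that the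
   edges (x_n, y) form the assignment added in round n. *)
Definition mstrategy (L R : finType) := seq (rmove L) -> {set R}.

Definition massign (L R : finType) (sigma : mstrategy L R)
  (r : nat -> rmove L) (n : nat) : {set R} :=
  sigma [seq r i | i <- iota 0 n.+1].

Definition rich_matching (F : realFieldType) (L R : finType)
  (E : L -> R -> bool) (D : nat) (eps : F) (K l : nat) (T : option nat) : Prop :=
  exists sigma : mstrategy L R,
    forall r : nat -> rmove L, legal_requester K T r ->
    forall n : nat,
      [/\ massign sigma r n \subset [set y | E (r n).2 y],
          ((1 - eps) * D%:R <= (#|massign sigma r n|)%:R)%R
        & forall y : R,
            count (fun i => y \in massign sigma r i) (alive_after r n) <= l].

From HB Require Import structures.
From mathcomp Require Import all_boot all_order all_algebra.
From mathcomp Require Import zify lra.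
Import Order.TTheory GRing.Theory Num.Theory.

Set Implicit Arguments.
Unset Strict Implicit.

(* Matcher plays her strategy for G and, for every right node y of G, a separate
   copy of her strategy for G'.  The copy attached to y sees only the rounds whose
   G-assignment uses y, renumbered consecutively, with the retained rounds renumbered
   in the same way.  Since y carries load at most l in G, that Requester play is
   legal with parameter l, and renumbering never lengthens a time gap, so
   T-expiration survives.  In round n the product assignment consists of the pairs
   (y, z) with y in the G-assignment and z in the assignment of the y-copy: it has
   at least (1 - eps) D1 (1 - eps') D2 >= (1 - eps - eps') D1 D2 edges, and a right
   node (y, z) is only ever loaded by rounds of the y-copy, where z has load 1. *)

Section LegalRequester.

Variables (L : Type) (K : nat) (T : option nat) (r : nat -> rmove L).
Hypothesis r_legal : legal_requester K T r.

Lemma kept_lt i j : j \in (r i).1 -> j < i.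
Proof.
elim: i j => [|i IHi] j; first by case: (r_legal 0) => _ kept _ _ /kept.
case: (r_legal i.+1) => _ kept _ _ /kept /=.
by rewrite inE => /predU1P[-> // | /IHi /ltnW].
Qed.

Lemma kept_down m d j : j \in (r (m + d)).1 -> j < m -> j \in (r m).1.
Proof.
elim: d => [|d IHd]; first by rewrite addn0.
rewrite addnS; case: (r_legal (m + d).+1) => _ kept _ _ /kept /=.
rewrite inE => /predU1P[-> | /IHd //]; lia.
Qed.

Lemma uniq_alive_after n : uniq (alive_after r n).
Proof.
case: (r_legal n) => uniq_kept _ _ _; rewrite /= uniq_kept andbT.
by apply/negP => /kept_lt; rewrite ltnn.
Qed.

End LegalRequester.

Lemma count_alive_before (L : Type) (r : nat -> rmove L) (Q : pred nat) l :
  (forall n, count Q (alive_after r n) <= l) ->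
  forall n, count Q (alive_before r n) <= l.
Proof. by move=> load [|n] //; apply: load. Qed.

Lemma uniq_leq_count (T : eqType) (Q : pred T) (s t : seq T) :
  uniq s -> {subset s <= t} -> count Q s <= count Q t.
Proof.
move=> uniq_s s_t; rewrite -!size_filter; apply: uniq_leq_size.
  exact: filter_uniq.
by move=> z; rewrite !mem_filter => /andP[-> /s_t].
Qed.

Section Restriction.

Variables (L : Type) (P : pred nat) (r : nat -> rmove L).

Definition subround j := count P (iota 0 j).

(* The test [j < i] is redundant for legal plays; it makes [restrict_move i]
   depend on [P] only below [i]. *)
Definition restrict_move i : rmove L :=
  ([seq subround j | j <- (r i).1 & (j < i) && P j], (r i).2).

Definition restrict_hist N := [seq restrict_move i | i <- iota 0 N & P i].

(* Only the first [N] rounds are restricted; later moves of the restricted play are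
   junk, which is harmless since strategies only read the history so far. *)
Definition sub_requester N : nat -> rmove L :=
  nth ([::], (r 0).2) (restrict_hist N).

Lemma subroundS j : subround j.+1 = subround j + P j.
Proof. by rewrite /subround -addn1 iotaD count_cat /= addn0. Qed.

Lemma subroundD i d : subround (i + d) = subround i + count P (iota i d).
Proof. by rewrite /subround iotaD count_cat. Qed.

Lemma leq_subround i j : i <= j -> subround i <= subround j.
Proof. by move/subnKC <-; rewrite subroundD leq_addr. Qed.

Lemma subround_lt i j : P i -> i < j -> subround i < subround j.
Proof. by move=> Pi /leq_subround; apply: leq_trans; rewrite subroundS Pi addn1. Qed.

Lemma ltn_subround i j : P i -> P j -> (subround i < subround j) = (i < j).
Proof.
move=> Pi Pj; apply/idP/idP; last exact: subround_lt.
by apply: contraTT; rewrite -!leqNgt; apply: leq_subround.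
Qed.

Lemma subround_inj i j : P i -> P j -> subround i = subround j -> i = j.
Proof.
move=> Pi Pj eq_ij; case: (ltngtP i j) => // [/(subround_lt Pi) | /(subround_lt Pj)].
  by rewrite eq_ij ltnn.
by rewrite eq_ij ltnn.
Qed.

Lemma subround_leq_addsub i j : i <= j -> subround j <= subround i + (j - i).
Proof.
move/subnKC=> {1}<-; rewrite subroundD leq_add2l.
by apply: leq_trans (count_size _ _) _; rewrite size_iota.
Qed.

Lemma subround_onto k N : k < subround N -> exists2 i, P i && (i < N) & subround i = k.
Proof.
elim: N => [|N IHN] //; rewrite subroundS => lt_k.
have [/IHN [i /andP[Pi lt_iN] <-] | le_k] := ltnP k (subround N).
  by exists i; rewrite // Pi ltnS ltnW.
case PN: (P N) lt_k => /= lt_k; last lia.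
by exists N; rewrite ?PN //; lia.
Qed.

Lemma restrict_histD m n : restrict_hist (m + n) =
  restrict_hist m ++ [seq restrict_move i | i <- iota m n & P i].
Proof. by rewrite /restrict_hist iotaD filter_cat map_cat. Qed.

Lemma size_restrict_hist N : size (restrict_hist N) = subround N.
Proof. by rewrite size_map size_filter. Qed.

Lemma take_restrict_hist m N :
  m <= N -> take (subround m) (restrict_hist N) = restrict_hist m.
Proof. by move/subnKC <-; rewrite restrict_histD -size_restrict_hist take_size_cat. Qed.

Lemma sub_requester_at i N :
  P i -> i < N -> sub_requester N (subround i) = restrict_move i.
Proof.
move=> Pi /subnKC <-; rewrite /sub_requester restrict_histD nth_cat size_restrict_hist.
rewrite subroundS Pi addn1 ltnSn -addn1 restrict_histD nth_cat size_restrict_hist.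
by rewrite ltnn subnn /= Pi.
Qed.

Lemma sub_requester_out k N : subround N <= k -> sub_requester N k = ([::], (r 0).2).
Proof. by move=> le_k; rewrite /sub_requester nth_default ?size_restrict_hist. Qed.

End Restriction.

Lemma massign_sub_requester (L R : finType) (s : mstrategy L R) (P : pred nat)
  (r : nat -> rmove L) i N :
  P i -> i < N ->
  massign s (sub_requester P r N) (subround P i) = s (restrict_hist P r i.+1).
Proof.
move=> Pi lt_iN.
have round_i : (subround P i).+1 = subround P i.+1 by rewrite subroundS Pi addn1.
rewrite /massign map_nth_iota0 round_i ?take_restrict_hist //.
by rewrite size_restrict_hist leq_subround.
Qed.

Section SubRequester.

Variables (L : Type) (K l : nat) (T : option nat) (P : pred nat).
Variables (r : nat -> rmove L) (N : nat).
Hypothesis r_legal : legal_requester K T r.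
Hypothesis P_load : forall i, count P (alive_after r i) <= l.

Local Notation r' := (sub_requester P r N).

Lemma subround_kept i j : i < N -> j \in (r i).1 -> P j ->
  subround P j \in alive_before r' (subround P i).
Proof.
move=> lt_iN kept_j Pj; have lt_ji := kept_lt r_legal kept_j.
have := subround_lt Pj lt_ji; case def_k: (subround P i) => [|k] // lt_jk.
have [i0 /andP[Pi0 lt_i0N] def_i0] : exists2 i0, P i0 && (i0 < N) & subround P i0 = k.
  by apply: subround_onto; rewrite -def_k leq_subround // ltnW.
have le_ji0 : j <= i0 by rewrite leqNgt -(ltn_subround Pi0 Pj) def_i0 -leqNgt.
have lt_i0i : i0 < i.
  by rewrite ltnNge; apply/negP => /(leq_subround P); rewrite def_k def_i0 ltnn.
rewrite /= -def_i0 /alive_after sub_requester_at // inE.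
move: le_ji0; rewrite leq_eqVlt => /predU1P[-> | lt_ji0]; first by rewrite eqxx.
apply/orP; right; apply: map_f; rewrite mem_filter lt_ji0 Pj /=.
by apply: (kept_down r_legal (d := i - i0)); rewrite // subnKC // ltnW.
Qed.

Lemma sub_requester_legal : legal_requester l T r'.
Proof.
move=> k; have [lt_k | ge_k] := ltnP k (subround P N); last first.
  by rewrite sub_requester_out //; split => //; case: T.
have [i /andP[Pi lt_iN] <-] := subround_onto lt_k.
rewrite sub_requester_at //=; case: (r_legal i) => uniq_kept _ _ expire.
split.
- rewrite map_inj_in_uniq ?filter_uniq // => j j'; rewrite !mem_filter.
  by move=> /andP[/andP[_ Pj] _] /andP[/andP[_ Pj'] _]; apply: subround_inj.
- move=> z /mapP[j]; rewrite mem_filter => /andP[/andP[_ Pj] kept_j] ->.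
  exact: subround_kept.
- rewrite size_map size_filter; have := P_load i; rewrite /= Pi.
  have : count (fun j => (j < i) && P j) (r i).1 <= count P (r i).1.
    by apply: sub_count => j /andP[].
  lia.
- case: T expire => // t expire z /mapP[j].
  rewrite mem_filter => /andP[/andP[lt_ji Pj] kept_j] ->.
  have := expire j kept_j; have := subround_leq_addsub P (ltnW lt_ji); lia.
Qed.

Lemma subround_alive n : n < N ->
  {subset [seq subround P j | j <- alive_after r n & P j] <=
          alive_before r' (subround P n.+1)}.
Proof.
move=> lt_nN z /mapP[j]; rewrite mem_filter /= inE.
case/andP=> Pj /predU1P[eq_jn | kept_j] ->.
  by rewrite eq_jn in Pj *; rewrite subroundS Pj addn1 /= inE eqxx.
case Pn: (P n); rewrite subroundS Pn ?addn0 ?addn1; last exact: subround_kept.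
rewrite /= inE sub_requester_at // map_f ?orbT // mem_filter kept_j Pj.
by rewrite (kept_lt r_legal kept_j).
Qed.

Lemma uniq_subround_alive n : uniq [seq subround P j | j <- alive_after r n & P j].
Proof.
rewrite map_inj_in_uniq ?filter_uniq ?(uniq_alive_after r_legal) // => j j'.
by rewrite !mem_filter => /andP[Pj _] /andP[Pj' _]; apply: subround_inj.
Qed.

End SubRequester.

Lemma eq_in_massign (L R : finType) (s : mstrategy L R) (r r' : nat -> rmove L) n :
  (forall i, i <= n -> r i = r' i) -> massign s r n = massign s r' n.
Proof.
move=> eq_r; rewrite /massign; congr s; apply/eq_in_map => i.
by rewrite mem_iota => /andP[_]; apply: eq_r.
Qed.

Lemma eq_in_restrict_hist (L : Type) (P P' : pred nat) (r r' : nat -> rmove L) N :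
  (forall i, i < N -> P i = P' i) -> (forall i, i < N -> r i = r' i) ->
  restrict_hist P r N = restrict_hist P' r' N.
Proof.
move=> eq_P eq_r; have lt_N i : i \in iota 0 N -> i < N by rewrite mem_iota.
rewrite /restrict_hist (eq_in_filter (a2 := P')); last by move=> i /lt_N; apply: eq_P.
apply/eq_in_map => i; rewrite mem_filter => /andP[_ /lt_N lt_iN].
rewrite /restrict_move eq_r //; congr pair.
rewrite (eq_in_filter (a2 := fun j => (j < i) && P' j)); last first.
  by move=> j _; case: ltnP => //= lt_ji; apply: eq_P; apply: ltn_trans lt_iN.
apply/eq_in_map => j; rewrite mem_filter => /andP[/andP[lt_ji _] _].
apply: eq_in_count => k; rewrite mem_iota => /andP[_ lt_kj]; apply: eq_P; lia.
Qed.

Definition uses_node (L R : finType) (s : mstrategy L R) (r : nat -> rmove L) (y : R) :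
  pred nat := fun i => y \in massign s r i.

Definition copy_assign (L R1 R2 : finType) (s1 : mstrategy L R1) (s2 : mstrategy L R2)
  (r : nat -> rmove L) (y : R1) (n : nat) : {set R2} :=
  s2 (restrict_hist (uses_node s1 r y) r n.+1).

Definition prod_assign (L R1 R2 : finType) (s1 : mstrategy L R1) (s2 : mstrategy L R2)
  (r : nat -> rmove L) (n : nat) : {set R1 * R2} :=
  [set p | (p.1 \in massign s1 r n) && (p.2 \in copy_assign s1 s2 r p.1 n)].

Definition prod_strategy (L R1 R2 : finType) (s1 : mstrategy L R1)
  (s2 : mstrategy L R2) : mstrategy L (R1 * R2)%type :=
  fun h => if h is m :: _ then prod_assign s1 s2 (nth m h) (size h).-1 else set0.

Lemma massign_prod_strategy (L R1 R2 : finType) (s1 : mstrategy L R1)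
  (s2 : mstrategy L R2) (r : nat -> rmove L) n :
  massign (prod_strategy s1 s2) r n = prod_assign s1 s2 r n.
Proof.
rewrite /massign /= size_map size_iota.
set h := [seq r j | j <- iota 0 n.+1].
have eq_r i : i <= n -> nth (r 0) h i = r i.
  by move=> le_in; rewrite (nth_map 0) ?size_iota // nth_iota.
have eq_s1 i : i <= n -> massign s1 (nth (r 0) h) i = massign s1 r i.
  by move=> le_in; apply: eq_in_massign => j le_ji; apply/eq_r/(leq_trans le_ji).
apply/setP => p; rewrite !inE eq_s1 // /copy_assign; congr (_ && (_ \in s2 _)).
by apply: eq_in_restrict_hist => i lt_in; rewrite ?eq_r ?/uses_node ?eq_s1.
Qed.

Definition winning (F : realFieldType) (L R : finType) (E : L -> R -> bool) (D : nat)
  (eps : F) (K l : nat) (T : option nat) (sigma : mstrategy L R) : Prop :=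
  forall r : nat -> rmove L, legal_requester K T r ->
  forall n : nat,
    [/\ massign sigma r n \subset [set y | E (r n).2 y],
        ((1 - eps) * D%:R <= (#|massign sigma r n|)%:R)%R
      & forall y : R,
          count (fun i => y \in massign sigma r i) (alive_after r n) <= l].

Lemma winning_eps_ge0 (F : realFieldType) (L R : finType) (E : L -> R -> bool) (D : nat)
  (eps : F) (K l : nat) (T : option nat) (sigma : mstrategy L R) (x : L) :
  left_degree E D -> winning E D eps K l T sigma -> 0 < D -> (0 <= eps)%R.
Proof.
move=> deg sigma_wins D_gt0; pose r (n : nat) : rmove L := ([::], x).
have r_legal : legal_requester K T r by move=> n; split => //; case: (T).
have [sub card _] := sigma_wins r r_legal 0.
have : #|massign sigma r 0| <= D by rewrite -(deg x) subset_leq_card.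
rewrite -(ler_nat F); have : (0 < D%:R :> F)%R by rewrite ltr0n.
move: card; set a := (#|_|%:R)%R; nra.
Qed.

Lemma card_dep_pairs (R1 R2 : finType) (A : {set R1}) (B : R1 -> {set R2}) :
  #|[set p : R1 * R2 | (p.1 \in A) && (p.2 \in B p.1)]| = \sum_(y in A) #|B y|.
Proof.
rewrite -sum1_card; under [RHS]eq_bigr => y _ do rewrite -sum1_card.
by rewrite pair_big_dep /=; apply: eq_bigl => p; rewrite inE.
Qed.

Lemma product_richness (F : realFieldType) (eps eps' a d1 d2 S : F) :
  (0 <= eps' -> 0 <= d1 -> 0 <= d2 -> (1 - eps) * d1 <= a -> a <= d1 ->
   0 <= S -> a * ((1 - eps') * d2) <= S -> (1 - (eps + eps')) * (d1 * d2) <= S)%R.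
Proof.
move=> eps'_ge0 d1_ge0 d2_ge0 a_ge a_le S_ge0 S_ge.
have eps_d1 : (0 <= eps * d1)%R by lra.
have eps_d12 : (0 <= eps * d1 * d2)%R by apply: mulr_ge0.
have [eps'_le1 | eps'_gt1] := lerP eps' 1.
  have : (0 <= (a - (1 - eps) * d1) * ((1 - eps') * d2))%R.
    by rewrite mulr_ge0 ?mulr_ge0 ?subr_ge0.
  have : (0 <= eps' * d2 * (eps * d1))%R by apply: mulr_ge0 => //; apply: mulr_ge0.
  nra.
have : (0 <= (eps' - 1) * (d1 * d2))%R by rewrite mulr_ge0 ?mulr_ge0 // subr_ge0 ltW.
nra.
Qed.

Section ProductGame.

Variables (F : realFieldType) (L R1 R2 : finType).
Variables (E1 : L -> R1 -> bool) (E2 : L -> R2 -> bool) (D1 D2 : nat).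
Variables (eps eps' : F) (K l : nat) (T : option nat).
Variables (s1 : mstrategy L R1) (s2 : mstrategy L R2).
Hypotheses (deg1 : left_degree E1 D1) (deg2 : left_degree E2 D2).
Hypothesis s1_wins : winning E1 D1 eps K l T s1.
Hypothesis s2_wins : winning E2 D2 eps' l 1 T s2.

Section Play.

Variable r : nat -> rmove L.
Hypothesis r_legal : legal_requester K T r.

Local Notation copy y N := (sub_requester (uses_node s1 r y) r N).

Lemma copy_legal y N : legal_requester l T (copy y N).
Proof.
by apply: (sub_requester_legal _ r_legal) => i; have [_ _] := s1_wins r_legal i; apply.
Qed.

Lemma copy_assign_spec y n : y \in massign s1 r n ->
  copy_assign s1 s2 r y n \subset [set z | E2 (r n).2 z] /\
  ((1 - eps') * D2%:R <= #|copy_assign s1 s2 r y n|%:R)%R.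
Proof.
move=> y_n; have [] := s2_wins (copy_legal y n.+1) (subround (uses_node s1 r y) n).
by rewrite massign_sub_requester // sub_requester_at.
Qed.

Lemma prod_assign_edges n :
  prod_assign s1 s2 r n \subset [set p | prod_graph E1 E2 (r n).2 p].
Proof.
have [sub1 _ _] := s1_wins r_legal n.
apply/subsetP => -[y z]; rewrite !inE /prod_graph /= => /andP[y_n z_n].
have [sub2 _] := copy_assign_spec y_n.
by have := subsetP sub1 _ y_n; have := subsetP sub2 _ z_n; rewrite !inE => -> ->.
Qed.

Lemma prod_assign_card n :
  ((1 - (eps + eps')) * (D1 * D2)%:R <= #|prod_assign s1 s2 r n|%:R)%R.
Proof.
have [sub1 card1 _] := s1_wins r_legal n.
have [-> | D2_gt0] := posnP D2; first by rewrite muln0 mulr0 ler0n.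
rewrite /prod_assign (card_dep_pairs _ (copy_assign s1 s2 r ^~ n)) natr_sum natrM.
apply: product_richness card1 _ _ _.
- exact: winning_eps_ge0 (r n).2 deg2 s2_wins D2_gt0.
- exact: ler0n.
- exact: ler0n.
- by rewrite ler_nat -(deg1 (r n).2) subset_leq_card.
- by apply: sumr_ge0 => y _; apply: ler0n.
rewrite mulr_natl -sumr_const; apply: ler_sum => y y_n.
exact: (copy_assign_spec y_n).2.
Qed.

Lemma prod_assign_load n p :
  count (fun i => p \in prod_assign s1 s2 r i) (alive_after r n) <= 1.
Proof.
case: p => y z; set P := uses_node s1 r y.
set Q := fun k => z \in massign s2 (copy y n.+1) k.
have -> : count (fun i => (y, z) \in prod_assign s1 s2 r i) (alive_after r n) =
          count Q [seq subround P i | i <- alive_after r n & P i].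
  rewrite count_map count_filter; apply: eq_in_count => i alive_i.
  have lt_in : i < n.+1.
    by move: alive_i; rewrite inE => /predU1P[-> | /(kept_lt r_legal) /ltnW].
  rewrite inE /= andbC /P /uses_node.
  case y_i: (y \in massign s1 r i); rewrite ?andbF //.
  by rewrite /Q massign_sub_requester.
apply: leq_trans (uniq_leq_count Q (uniq_subround_alive P r_legal n)
                                   (subround_alive r_legal (ltnSn n))) _.
by apply: count_alive_before => k; have [_ _] := s2_wins (copy_legal y n.+1) k; apply.
Qed.

End Play.

Lemma prod_strategy_winning :
  winning (prod_graph E1 E2) (D1 * D2) (eps + eps') K 1 T (prod_strategy s1 s2).
Proof.
move=> r r_legal n; rewrite massign_prod_strategy; split.
- exact: prod_assign_edges.
- exact: prod_assign_card.
- move=> p; under eq_count => i do rewrite massign_prod_strategy.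
  by apply: prod_assign_load.
Qed.

End ProductGame.

Theorem lemma3 (F : realFieldType) (L R1 R2 : finType)
  (E1 : L -> R1 -> bool) (E2 : L -> R2 -> bool) (D1 D2 : nat)
  (eps eps' : F) (K l : nat) (T : option nat) :
  left_degree E1 D1 -> left_degree E2 D2 ->
  rich_matching E1 D1 eps K l T ->
  rich_matching E2 D2 eps' l 1 T ->
  rich_matching (prod_graph E1 E2) (D1 * D2) (eps + eps')%R K 1 T.
Proof.
move=> deg1 deg2 [s1 s1_wins] [s2 s2_wins].
exists (prod_strategy s1 s2).
exact: prod_strategy_winning deg1 deg2 s1_wins s2_wins.
Qed.
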